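(* Let $G$ be a graph with vertex set $A \cup B \cup C$, where $A, B, C$ are pairwise disjoint, $|A| = 2$, and $|B|, |C| \in \{3, 4\}$. Suppose that the bipartite graph of edges of $G$ between $B$ and $A \cup C$ is a complete bipartite graph between $B$ and $A \cup C$ minus a matching which has at most two edges between $B$ and $C$, and that $G$ has no edges between $A$ and $C$. Then there is a fractional triangle packing $\omega$ in $G$, assigning positive weight only to triangles that intersect exactly two of the sets $A, B, C$, such that $\omega(e) = 1/2$ for every edge $e$ of $G$ with both ends in $A$ or both ends in $C$, and $\omega(e) = 1$ for every edge $e$ of $G$ with both ends in $B$.
   Context: A fractional triangle packing in a graph $G$ is a function $\omega$ from the set of triangles of $G$ to $[0,1]$ such that $\omega(e) := \sum_{T \ni e}\omega(T) \le 1$ for every edge $e$ of $G$, where the sum is over triangles $T$ of $G$ containing $e$. *)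

From mathcomp Require Import all_boot all_order all_algebra.
Set Implicit Arguments. Unset Strict Implicit. Unset Printing Implicit Defensive.
Import Order.TTheory GRing.Theory Num.Theory.

Definition simple_graph (T : finType) (adj : rel T) : Prop :=
  symmetric adj /\ irreflexive adj.

Definition is_triangle (T : finType) (adj : rel T) (t : {set T}) : bool :=
  (#|t| == 3) && [forall x in t, forall y in t, (x != y) ==> adj x y].

Definition edge_load (R : numDomainType) (T : finType) (adj : rel T)
  (w : {set T} -> R) (x y : T) : R :=
  (\sum_(t : {set T} | is_triangle adj t && (x \in t) && (y \in t)) w t)%R.

Definition frac_triangle_packing (R : numDomainType) (T : finType) (adj : rel T)
  (w : {set T} -> R) : Prop :=
  (forall t, ~~ is_triangle adj t -> w t = 0%R) /\
  (forall t, is_triangle adj t -> (0 <= w t <= 1)%R) /\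
  (forall x y, adj x y -> (edge_load adj w x y <= 1)%R).

Definition meets_exactly_two (T : finType) (A B C t : {set T}) : bool :=
  (((t :&: A != set0) : nat) + ((t :&: B != set0) : nat)
     + ((t :&: C != set0) : nat) == 2)%N.

From mathcomp Require Import all_boot all_order all_algebra zify.
Import Order.TTheory GRing.Theory Num.Theory.

(* Number the vertices of G by the labels 0..9 so that A, B and C receive the
   blocks [0, 2), [2, 2 + |B|) and [6, 6 + |C|) and every edge of the matching
   M goes to an edge of one fixed maximal "model" matching. The model graph has
   all edges inside the three blocks and all edges between B and A u C except
   the model matching, so G has every cross edge of the model and the model has
   every edge of G inside a part. Up to isomorphism only six model graphs occur,
   and for each of them an explicit packing with weights in multiples of 1/4 is
   checked by computation. Pulling it back to G, a weighted triangle has exactly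
   one edge inside a part, so the loads of the internal edges of G are those of
   the model, while the loads of the cross edges can only decrease. *)

Section SupportSums.
Variables (R : numDomainType) (I : Type) (r : seq I).

Lemma ler_sum_support (P Q : pred I) (F : I -> R) :
  (forall i, 0 <= F i)%R -> (forall i, P i -> F i != 0%R -> Q i) ->
  (\sum_(i <- r | P i) F i <= \sum_(i <- r | Q i) F i)%R.
Proof.
move=> F_ge0 PQ; rewrite [X in (X <= _)%R]big_mkcond [X in (_ <= X)%R]big_mkcond /=.
apply: ler_sum => i _; case: ifP => Pi; case: ifP => Qi //.
have [->|Fi_neq0] := eqVneq (F i) 0%R; first exact: lexx.
by rewrite (PQ i Pi Fi_neq0) in Qi.
Qed.

Lemma eq_sum_support (P Q : pred I) (F : I -> R) :
  (forall i, F i != 0%R -> P i = Q i) ->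
  (\sum_(i <- r | P i) F i = \sum_(i <- r | Q i) F i)%R.
Proof.
move=> PQ; rewrite big_mkcond [RHS]big_mkcond /=; apply: eq_bigr => i _.
by have [->|/PQ->] := eqVneq (F i) 0%R; rewrite ?if_same.
Qed.

End SupportSums.

Lemma big_iota_codom {V : nmodType} {T : finType} {g : T -> nat} {N : nat}
    {P : pred nat} {F : nat -> V} :
  injective g -> (forall i, P i -> i \in codom g) -> (forall x, P (g x) -> g x < N) ->
  (\sum_(i <- iota 0 N | P i) F i = \sum_(x | P (g x)) F (g x))%R.
Proof.
move=> g_inj P_codom P_lt; rewrite -[RHS](big_map g) -[LHS]big_filter -[RHS]big_filter.
apply: perm_big; apply: uniq_perm;
  rewrite ?filter_uniq ?iota_uniq ?map_inj_uniq ?index_enum_uniq //.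
move=> i; rewrite !mem_filter mem_iota; apply: andb_id2l => Pi.
have /codomP[x gx] := P_codom i Pi; rewrite gx in Pi *.
by rewrite add0n P_lt // map_f ?mem_index_enum.
Qed.

Section SimpleGraph.
Variables (T : finType) (adj : rel T).
Implicit Types (x y z : T) (t : {set T}).

Lemma frac_triangle_packing_of_loads (R : numDomainType) (w : {set T} -> R) :
  (forall t, ~~ is_triangle adj t -> w t = 0%R) -> (forall t, 0 <= w t)%R ->
  (forall x y, adj x y -> edge_load adj w x y <= 1)%R ->
  frac_triangle_packing adj w.
Proof.
move=> w_tri w_ge0 load_le1; do 2!split=> //; move=> t tri_t; rewrite w_ge0 /=.
have /andP[/eqP card_t /forall_inP t_adj] := tri_t.
have [x xt] : exists x, x \in t by apply/card_gt0P; rewrite card_t.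
have [y] : exists y, y \in t :\ x.
  by apply/card_gt0P; move: card_t; rewrite (cardsD1 x t) xt add1n => -[->].
rewrite !inE => /andP[yx yt].
have xy : adj x y by move/forall_inP/(_ y yt): (t_adj x xt); rewrite eq_sym yx.
apply: le_trans (load_le1 x y xy); rewrite /edge_load (bigD1 t) /=; last first.
  by rewrite tri_t xt yt.
by rewrite lerDl sumr_ge0.
Qed.

Hypotheses (adj_sym : symmetric adj) (adj_irr : irreflexive adj).

Lemma adj_neq {x y} : adj x y -> x != y.
Proof. by apply: contraTneq => ->; rewrite adj_irr. Qed.

Lemma is_triangle_set3 x y z :
  adj x y -> adj x z -> adj y z -> is_triangle adj [set x; y; z].
Proof.
move=> xy xz yz; apply/andP; split.
  by rewrite -setUA cardsU1 cards2 !inE negb_or !adj_neq.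
apply/forall_inP => u; rewrite !inE -orbA => u_xyz; apply/forall_inP => v; rewrite !inE -orbA.
by case/or3P: u_xyz => /eqP->; case/or3P=> /eqP->;
  rewrite ?eqxx ?(adj_sym y x) ?(adj_sym z x) ?(adj_sym z y) ?xy ?xz ?yz ?implybT.
Qed.

Lemma triangle_on_edge {t x y} :
  is_triangle adj t -> x \in t -> y \in t -> x != y ->
  exists2 z, adj x z && adj y z & t = [set x; y; z].
Proof.
case/andP=> /eqP card_t /forall_inP t_adj xt yt xy.
have t_edge u v : u \in t -> v \in t -> u != v -> adj u v.
  by move=> ut vt; move/forall_inP/(_ v vt)/implyP: (t_adj u ut).
have xy_t : [set x; y] \subset t by apply/subsetP => u; rewrite !inE => /orP[]/eqP->.
have [z] : exists z, z \in t :\: [set x; y].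
  by apply/card_gt0P; rewrite cardsD (setIidPr xy_t) cards2 xy card_t.
rewrite !inE negb_or => /andP[/andP[zx zy] zt].
exists z; first by rewrite !t_edge // eq_sym.
apply/eqP; rewrite eq_sym eqEcard card_t -setUA cardsU1 cards2 !inE negb_or xy.
rewrite eq_sym zx eq_sym zy /= leqnn andbT.
by apply/subsetP => u; rewrite !inE; case/or3P=> /eqP->.
Qed.

Lemma edge_load_apex (R : numDomainType) (w : {set T} -> R) x y : adj x y ->
  edge_load adj w x y = (\sum_(z | adj x z && adj y z) w [set x; y; z])%R.
Proof.
move=> xy; pose apexes := [set z | adj x z && adj y z].
have set3_inj : {in apexes &, injective (fun z => [set x; y; z])}.
  move=> z z'; rewrite !inE => /andP[xz yz] /andP[xz' yz'] eq_set3.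
  have : z \in [set x; y; z'] by rewrite -eq_set3 !inE eqxx orbT.
  by rewrite !inE -orbA; case/or3P=> /eqP // eq_z; rewrite eq_z adj_irr in xz yz.
rewrite -big_set /= -(big_imset _ set3_inj) /edge_load; apply: eq_bigl => t.
apply/andP/imsetP => [[/andP[tri_t xt] yt]|[z]].
  have [z xyz ->] := triangle_on_edge tri_t xt yt (adj_neq xy).
  by exists z; rewrite ?inE.
rewrite inE => /andP[xz yz] ->.
by rewrite is_triangle_set3 // !inE !eqxx ?orbT.
Qed.

End SimpleGraph.

Arguments adj_neq {T adj}.

Lemma extend_injection (T : finType) (U : eqType) (X X' : {set T}) (L : seq U)
    (p : T -> U) :
  X' \subset X -> uniq L -> #|X| = size L ->
  {in X' &, injective p} -> {in X', forall x, p x \in L} ->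
  exists r : T -> U, [/\ {in X &, injective r}, {in X, forall x, r x \in L},
    {in X', r =1 p} & {subset L <= [seq r x | x in X]}].
Proof.
move=> sub_X'X uniq_L card_X inj_p p_L.
set S := [seq p x | x in X']; set F := enum (X :\: X').
set G := filter (predC (mem S)) L.
have uniq_S : uniq S.
  by rewrite map_inj_in_uniq ?enum_uniq // => x y; rewrite !mem_enum; apply: inj_p.
have size_G : size G = size F.
  have S_L : perm_eq (filter (mem S) L) S.
    apply: uniq_perm; rewrite ?filter_uniq // => u; rewrite mem_filter andb_idr //.
    by case/mapP=> x; rewrite mem_enum => x_X' ->; apply: p_L.
  have size_S : size S = #|X'| by rewrite size_map -cardE.
  rewrite -cardE cardsD (setIidPr sub_X'X) card_X -size_S -(perm_size S_L).
  by rewrite !size_filter -(count_predC (mem S) L) addKn.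
pose r x := if x \in X' then p x else nth (p x) G (index x F).
have r_free x : x \in X :\: X' -> r x \in G.
  move=> x_free; have := x_free; rewrite /r inE => /andP[/negbTE-> _].
  by apply: mem_nth; rewrite size_G index_mem mem_enum.
have r_L x : x \in X -> r x \in L.
  move=> x_X; have [x_X'|x_nX'] := boolP (x \in X'); first by rewrite /r x_X' p_L.
  by have := r_free x; rewrite inE x_nX' x_X mem_filter => /(_ isT)/andP[].
have r_inj : {in X &, injective r}.
  move=> x y x_X y_X; rewrite /r.
  case: ifP => x_X'; case: ifP => y_X'; first exact: inj_p.
  - move=> eq_r; have := r_free y; rewrite inE y_X' y_X /r y_X' -eq_r => /(_ isT).
    by rewrite mem_filter /= map_f ?mem_enum.
  - move=> eq_r; have := r_free x; rewrite inE x_X' x_X /r x_X' eq_r => /(_ isT).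
    by rewrite mem_filter /= map_f ?mem_enum.
  have [x_F y_F] : x \in F /\ y \in F by rewrite !mem_enum !inE x_X' y_X' x_X y_X.
  rewrite (set_nth_default (p x) (p y)) ?size_G ?index_mem //.
  move/eqP; rewrite nth_uniq ?size_G ?index_mem ?filter_uniq // => /eqP.
  exact: index_inj.
exists r; split=> //; first by move=> x x_X'; rewrite /r x_X'.
have uniq_rX : uniq [seq r x | x in X].
  by rewrite map_inj_in_uniq ?enum_uniq // => x y; rewrite !mem_enum; apply: r_inj.
have rX_L : {subset [seq r x | x in X] <= L}.
  by move=> u /mapP[x]; rewrite mem_enum => x_X ->; apply: r_L.
have [|_ rX_eq_L] := uniq_min_size uniq_rX rX_L; first by rewrite size_map -cardE card_X.
by move=> u; rewrite rX_eq_L.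
Qed.

Definition interval_labelling {T : finType} (X : {set T}) (lo : nat) (r : T -> nat) :=
  [/\ {in X &, injective r}, {in X, forall x, lo <= r x < lo + #|X|} &
      forall i, lo <= i < lo + #|X| -> exists2 x, x \in X & r x = i].

Lemma extend_interval_labelling {T : finType} {X X' : {set T}} (lo : nat) {p : T -> nat} :
  X' \subset X -> {in X' &, injective p} -> {in X', forall x, lo <= p x < lo + #|X|} ->
  exists2 r, interval_labelling X lo r & {in X', r =1 p}.
Proof.
move=> sub_X'X inj_p p_range.
have [|||r [r_inj r_L r_p r_onto]] :=
  @extend_injection T nat X X' (iota lo #|X|) p sub_X'X _ _ inj_p.
- exact: iota_uniq.
- by rewrite size_iota.
- by move=> x /p_range; rewrite mem_iota.
exists r => //; split=> // [x /r_L|i]; first by rewrite mem_iota.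
by rewrite -mem_iota => /r_onto/mapP[x]; rewrite mem_enum => x_X ->; exists x.
Qed.

(** * The model graphs *)

Definition model_part (i : nat) : nat := if i < 2 then 0 else if i < 6 then 1 else 2.

Definition model_vertex (m n i : nat) : bool := [|| i < 2, 2 <= i < 2 + m | 6 <= i < 6 + n].

(* The model matching: the first [m - k] labels of B are matched to A, the
   last [k] to the last [k] labels of C. *)
Definition model_mate (m n k i : nat) : nat := if i - 2 < m - k then i - 2 else i + n + 4 - m.

Definition model_adj (m n k u v : nat) : bool :=
  [&& model_vertex m n u, model_vertex m n v, u != v &
      (model_part u == model_part v) ||
      (if model_part u == 1 then v != model_mate m n k u
       else if model_part v == 1 then u != model_mate m n k v
       else false)].

Definition spans_two_parts (s : seq nat) : bool :=
  has (fun i => model_part i == 0) s + has (fun i => model_part i == 1) s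
    + has (fun i => model_part i == 2) s == 2.

Definition model_triangle (m n k : nat) (s : seq nat) : bool :=
  [&& uniq s, size s == 3 & all (fun u => all (fun v => (u == v) || model_adj m n k u v) s) s].

(* Weights in units of 1/4, obtained by solving the packing linear program. *)
Definition model_table (m n k : nat) : seq (seq nat * nat) :=
  match m, n, k with
  | 3, 3, 1 => [:: ([:: 0; 1; 4], 2); ([:: 1; 2; 4], 2); ([:: 2; 3; 6], 1); ([:: 2; 3; 7], 1);
      ([:: 2; 3; 8], 2); ([:: 2; 4; 6], 2); ([:: 2; 6; 7], 1); ([:: 2; 7; 8], 2);
      ([:: 3; 4; 6], 1); ([:: 3; 4; 7], 3); ([:: 3; 6; 8], 2); ([:: 4; 6; 7], 1)]
  | 3, 3, 2 => [:: ([:: 0; 1; 3], 1); ([:: 0; 1; 4], 1); ([:: 0; 3; 4], 1); ([:: 1; 3; 4], 3);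
      ([:: 2; 3; 6], 2); ([:: 2; 3; 8], 2); ([:: 2; 4; 6], 2); ([:: 2; 4; 7], 2);
      ([:: 2; 7; 8], 2); ([:: 3; 6; 8], 2); ([:: 4; 6; 7], 2)]
  | 3, 4, 1 => [:: ([:: 0; 1; 4], 2); ([:: 1; 2; 4], 2); ([:: 2; 3; 6], 2); ([:: 2; 3; 7], 1);
      ([:: 2; 3; 9], 1); ([:: 2; 4; 6], 1); ([:: 2; 4; 7], 1); ([:: 2; 6; 8], 1);
      ([:: 2; 7; 8], 1); ([:: 2; 7; 9], 1); ([:: 2; 8; 9], 2); ([:: 3; 4; 7], 1);
      ([:: 3; 4; 8], 3); ([:: 3; 6; 9], 2); ([:: 3; 7; 8], 1); ([:: 3; 7; 9], 1);
      ([:: 4; 6; 7], 2); ([:: 4; 6; 8], 1)]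
  | 3, 4, 2 => [:: ([:: 0; 1; 4], 2); ([:: 1; 2; 3], 2); ([:: 1; 3; 4], 2); ([:: 2; 3; 7], 1);
      ([:: 2; 3; 9], 1); ([:: 2; 4; 6], 1); ([:: 2; 4; 7], 2); ([:: 2; 4; 8], 1);
      ([:: 2; 6; 7], 1); ([:: 2; 6; 8], 1); ([:: 2; 6; 9], 1); ([:: 2; 8; 9], 2);
      ([:: 3; 4; 6], 2); ([:: 3; 6; 7], 1); ([:: 3; 6; 9], 1); ([:: 3; 7; 9], 2);
      ([:: 4; 6; 8], 1); ([:: 4; 7; 8], 2)]
  | 4, 3, 2 => [:: ([:: 0; 1; 5], 2); ([:: 0; 3; 4], 3); ([:: 0; 3; 5], 1); ([:: 0; 4; 5], 1);
      ([:: 1; 2; 4], 3); ([:: 1; 2; 5], 1); ([:: 1; 4; 5], 1); ([:: 2; 3; 6], 2);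
      ([:: 2; 3; 8], 2); ([:: 2; 4; 8], 1); ([:: 2; 5; 6], 1); ([:: 2; 5; 7], 2);
      ([:: 2; 6; 7], 1); ([:: 2; 7; 8], 1); ([:: 3; 4; 8], 1); ([:: 3; 5; 6], 1);
      ([:: 3; 5; 7], 2); ([:: 3; 6; 7], 1); ([:: 3; 7; 8], 1); ([:: 4; 5; 6], 2);
      ([:: 4; 6; 8], 2)]
  | 4, 4, 2 => [:: ([:: 0; 1; 4], 1); ([:: 0; 1; 5], 1); ([:: 0; 4; 5], 3); ([:: 1; 2; 4], 2);
      ([:: 1; 2; 5], 2); ([:: 1; 4; 5], 1); ([:: 2; 3; 6], 1); ([:: 2; 3; 7], 1);
      ([:: 2; 3; 8], 1); ([:: 2; 3; 9], 1); ([:: 2; 4; 7], 1); ([:: 2; 4; 9], 1);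
      ([:: 2; 5; 6], 1); ([:: 2; 5; 8], 1); ([:: 2; 6; 9], 2); ([:: 2; 7; 8], 2);
      ([:: 3; 4; 6], 3); ([:: 3; 4; 9], 1); ([:: 3; 5; 7], 3); ([:: 3; 5; 8], 1);
      ([:: 3; 8; 9], 2); ([:: 4; 6; 7], 1); ([:: 4; 7; 9], 2); ([:: 5; 6; 7], 1);
      ([:: 5; 6; 8], 2)]
  | _, _, _ => [::]
  end.

Definition model_quarters (m n k : nat) (s : seq nat) : nat :=
  if model_triangle m n k s && spans_two_parts s
  then sumn [seq e.2 | e <- model_table m n k & perm_eq e.1 s] else 0.

Definition model_load (m n k u v : nat) : nat :=
  sumn [seq model_quarters m n k [:: u; v; z] |
         z <- iota 0 10 & model_adj m n k u z && model_adj m n k v z].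

Definition model_loads_ok (m n k : nat) : bool :=
  all (fun u => all (fun v => model_adj m n k u v ==>
    if model_part u == model_part v
    then model_load m n k u v == (if model_part u == 1 then 4 else 2)
    else model_load m n k u v <= 4) (iota 0 10)) (iota 0 10).

Lemma model_loads_ok_for m n kC : (m == 3) || (m == 4) -> (n == 3) || (n == 4) ->
  kC <= 2 -> model_loads_ok m n (maxn kC (m - 2)).
Proof. by case/orP=> /eqP-> /orP[]/eqP->; case: kC => [|[|[|]]] // _; vm_compute. Qed.

Section ModelFacts.
Variables (m n k : nat).
Local Notation madj := (model_adj m n k).
Local Notation Q := (model_quarters m n k).

Lemma model_adj_vertices u v : madj u v -> model_vertex m n u && model_vertex m n v.
Proof. by case/and4P=> -> ->. Qed.

Lemma model_adj_same_part u v : model_vertex m n u -> model_vertex m n v -> u != v ->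
  model_part u = model_part v -> madj u v.
Proof. by move=> uV vV uv puv; rewrite /model_adj uV vV uv puv eqxx. Qed.

Lemma model_quarters_perm s1 s2 : perm_eq s1 s2 -> Q s1 = Q s2.
Proof.
move=> s12; rewrite /model_quarters /model_triangle /spans_two_parts.
rewrite (perm_uniq s12) (perm_size s12) !(perm_has _ s12) (perm_all _ s12).
under eq_all do rewrite (perm_all _ s12).
by under eq_filter do rewrite (permPr s12).
Qed.

Lemma model_quarters_neq0 {u v z} : Q [:: u; v; z] != 0 ->
  [/\ madj u v, madj u z, madj v z & spans_two_parts [:: u; v; z]].
Proof.
rewrite /model_quarters; case: ifP => // /andP[/and3P[/= uniq_uvz _ adj_uvz] parts] _.
move: uniq_uvz adj_uvz; rewrite !inE !negb_or !eqxx /= => /and3P[/andP[uv uz] vz _].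
rewrite (negbTE uv) (negbTE uz) (negbTE vz) /= !andbT.
by case/and3P=> /andP[-> ->] /andP[_ ->] _.
Qed.

Lemma model_load_sum u v :
  model_load m n k u v = \sum_(z <- iota 0 10 | madj u z && madj v z) Q [:: u; v; z].
Proof. by rewrite /model_load sumnE big_map big_filter. Qed.

Lemma model_loadsP {u v} : model_loads_ok m n k -> madj u v -> u < 10 -> v < 10 ->
  if model_part u == model_part v
  then model_load m n k u v = (if model_part u == 1 then 4 else 2)
  else model_load m n k u v <= 4.
Proof.
move=> /allP/(_ u) ok uv u10 v10; move: ok; rewrite mem_iota u10 => /(_ isT)/allP/(_ v).
by rewrite mem_iota v10 uv => /(_ isT); case: ifP => // _ /eqP.
Qed.

End ModelFacts.

Arguments model_quarters_neq0 {m n k u v z}.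
Arguments model_loadsP {m n k u v}.

Lemma spans_two_parts_apex {u v z} : model_part u = model_part v ->
  spans_two_parts [:: u; v; z] -> model_part z != model_part u.
Proof.
rewrite /spans_two_parts /= => <-; apply: contraL => /eqP->.
by case: (model_part u) => [|[|[|]]].
Qed.

(** * Pulling back a model packing *)

Section PullbackPacking.
Variables (R : realFieldType) (T : finType) (adj : rel T) (A B C : {set T}).
Variables (m n k : nat) (g : T -> nat).
Hypotheses (adj_sym : symmetric adj) (adj_irr : irreflexive adj).
Hypothesis g_inj : injective g.
Hypothesis g_vertex : forall x, model_vertex m n (g x).
Hypothesis g_onto : forall i, model_vertex m n i -> i \in codom g.
Hypothesis vertex_lt10 : forall i, model_vertex m n i -> i < 10.
Hypothesis g_A : forall x, (x \in A) = (model_part (g x) == 0).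
Hypothesis g_B : forall x, (x \in B) = (model_part (g x) == 1).
Hypothesis g_C : forall x, (x \in C) = (model_part (g x) == 2).
Hypothesis adj_cross : forall x z,
  model_part (g x) != model_part (g z) -> model_adj m n k (g x) (g z) -> adj x z.
Hypothesis loads_ok : model_loads_ok m n k.

Local Notation madj := (model_adj m n k).
Local Notation Q := (model_quarters m n k).
Local Notation apex_weight x y z := ((Q [:: g x; g y; g z])%:R / 4%:R : R)%R.

Definition pullback_weight (t : {set T}) : R :=
  if is_triangle adj t then ((Q [seq g x | x <- enum t])%:R / 4%:R)%R else 0%R.

Lemma pullback_weight_ge0 t : (0 <= pullback_weight t)%R.
Proof. by rewrite /pullback_weight; case: ifP => // _; rewrite divr_ge0 ?ler0n. Qed.

Lemma quarter_neq0 {q} : ((q%:R / 4%:R : R) != 0)%R -> q != 0.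
Proof. by apply: contraNneq => ->; rewrite mul0r. Qed.

Lemma g_lt10 x : g x < 10.
Proof. exact/vertex_lt10/g_vertex. Qed.

Lemma edge_load_pullback x y : adj x y ->
  edge_load adj pullback_weight x y = (\sum_(z | adj x z && adj y z) apex_weight x y z)%R.
Proof.
move=> xy; rewrite edge_load_apex //; apply: eq_bigr => z /andP[xz yz].
rewrite /pullback_weight is_triangle_set3 //; congr (_%:R / _)%R.
rewrite (_ : [:: g x; g y; g z] = map g [:: x; y; z]) //.
apply/model_quarters_perm/perm_map/uniq_perm; rewrite ?enum_uniq //.
  by rewrite /= !inE negb_or !(adj_neq adj_irr).
by move=> u; rewrite mem_enum !inE orbA.
Qed.

Lemma model_load_pullback x y :
  ((model_load m n k (g x) (g y))%:R =
     \sum_(z | madj (g x) (g z) && madj (g y) (g z)) (Q [:: g x; g y; g z])%:R :> R)%R.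
Proof.
rewrite model_load_sum natr_sum (big_iota_codom g_inj) // => [i|z].
  by case/andP=> /model_adj_vertices/andP[_ /g_onto].
by case/andP=> /model_adj_vertices/andP[_ /vertex_lt10].
Qed.

Lemma pullback_load_le1 x y : adj x y -> (edge_load adj pullback_weight x y <= 1)%R.
Proof.
move=> xy; rewrite edge_load_pullback //.
have [mxy|nmxy] := boolP (madj (g x) (g y)); last first.
  rewrite big1 // => z _; apply/eqP; apply: contraNT nmxy => nz.
  by have [] := model_quarters_neq0 (quarter_neq0 nz).
apply: (@le_trans _ _ ((model_load m n k (g x) (g y))%:R / 4%:R)%R).
  rewrite model_load_pullback mulr_suml; apply: ler_sum_support => [z|z _ nz].
    by rewrite divr_ge0 ?ler0n.
  by have [_ -> ->] := model_quarters_neq0 (quarter_neq0 nz).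
rewrite ler_pdivrMr ?ltr0n // mul1r ler_nat.
by have := model_loadsP loads_ok mxy (g_lt10 x) (g_lt10 y); case: ifP => // _ ->; case: ifP.
Qed.

Lemma pullback_load_internal {x y p} : adj x y ->
  model_part (g x) = p -> model_part (g y) = p ->
  edge_load adj pullback_weight x y = if p == 1 then 1%R else 2^-1%R.
Proof.
move=> xy <- /esym same; have mxy : madj (g x) (g y).
  by rewrite model_adj_same_part ?g_vertex // (inj_eq g_inj) (adj_neq adj_irr).
have load_xy := model_loadsP loads_ok mxy (g_lt10 x) (g_lt10 y).
rewrite same eqxx -same in load_xy.
transitivity ((model_load m n k (g x) (g y))%:R / 4%:R : R)%R.
  rewrite edge_load_pullback // model_load_pullback mulr_suml.
  apply: eq_sum_support => z nz.
  (* A weighted apex lies outside the part of x and y, so xz and yz are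
     cross edges of the model, hence edges of G. *)
  have [_ mxz myz parts] := model_quarters_neq0 (quarter_neq0 nz).
  have zx := spans_two_parts_apex same parts; have zy := zx; rewrite same in zy.
  by rewrite mxz myz !adj_cross // eq_sym.
rewrite load_xy; case: ifP => _; first by rewrite divff // pnatr_eq0.
by rewrite (natrM R 2 2) invfM mulrA divff ?mul1r // pnatr_eq0.
Qed.

Lemma pullback_weight_support t :
  (0 < pullback_weight t)%R -> meets_exactly_two A B C t.
Proof.
rewrite /pullback_weight; case: ifP => _; last by rewrite ltxx.
move/lt0r_neq0/quarter_neq0; rewrite /model_quarters; case: ifP => // /andP[_ parts] _.
have meets S : (t :&: S != set0) = has (mem S) (enum t).
  apply/set0Pn/hasP => [[x]|[x]].
    by rewrite inE => /andP[xt xS]; exists x; rewrite ?mem_enum.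
  by rewrite mem_enum => xt xS; exists x; rewrite inE xt.
move: parts; rewrite /meets_exactly_two /spans_two_parts !has_map !meets.
by rewrite (eq_has g_A) (eq_has g_B) (eq_has g_C).
Qed.

Lemma pullback_packing : exists w : {set T} -> R,
  [/\ frac_triangle_packing adj w,
      (forall t, (0 < w t)%R -> meets_exactly_two A B C t),
      (forall x y, adj x y -> x \in A -> y \in A -> edge_load adj w x y = 2^-1)%R,
      (forall x y, adj x y -> x \in C -> y \in C -> edge_load adj w x y = 2^-1)%R &
      (forall x y, adj x y -> x \in B -> y \in B -> edge_load adj w x y = 1)%R].
Proof.
exists pullback_weight; split.
- apply: frac_triangle_packing_of_loads => [t /negbTE tri_t||]; last exact: pullback_load_le1.
    by rewrite /pullback_weight tri_t.
  exact: pullback_weight_ge0.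
- exact: pullback_weight_support.
- by move=> x y xy; rewrite !g_A => /eqP xA /eqP yA; rewrite (pullback_load_internal xy xA yA).
- by move=> x y xy; rewrite !g_C => /eqP xC /eqP yC; rewrite (pullback_load_internal xy xC yC).
- by move=> x y xy; rewrite !g_B => /eqP xB /eqP yB; rewrite (pullback_load_internal xy xB yB).
Qed.

End PullbackPacking.

(** * Labelling G along its matching *)

Section MatchingLabelling.
Variables (T : finType) (A B C : {set T}) (M : {set T * T}).
Hypotheses (disjAB : [disjoint A & B]) (disjAC : [disjoint A & C]).
Hypotheses (disjBC : [disjoint B & C]) (coverABC : A :|: B :|: C = [set: T]).
Hypotheses (cardA : #|A| = 2) (cardB : (#|B| == 3) || (#|B| == 4)).
Hypothesis cardC : (#|C| == 3) || (#|C| == 4).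
Hypothesis M_sub : forall p, p \in M -> (p.1 \in B) && (p.2 \in A :|: C).
Hypothesis M_matching :
  forall p q, p \in M -> q \in M -> p != q -> (p.1 != q.1) && (p.2 != q.2).

Local Notation m := #|B|.
Local Notation n := #|C|.

Definition matched_into (S : {set T}) := [set p in M | p.2 \in S].

(* With [k] B--C edges the model matching has [m - k <= 2] B--A edges; this
   choice of [k] leaves room for both kinds of edges of M. *)
Definition model_k := maxn #|matched_into C| (m - 2).

Hypothesis matched_C_le2 : #|matched_into C| <= 2.

Variable adj : rel T.
Hypotheses (adj_sym : symmetric adj) (adj_irr : irreflexive adj).
Hypothesis adj_B_AC : forall b x, b \in B -> x \in A :|: C -> adj b x = ((b, x) \notin M).

Record model_labelling (g : T -> nat) : Prop := ModelLabelling {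
  labelling_inj : injective g;
  labelling_A : {in A, forall x, g x < 2};
  labelling_B : {in B, forall x, 2 <= g x < 2 + m};
  labelling_C : {in C, forall x, 6 <= g x < 6 + n};
  labelling_onto : forall i, model_vertex m n i -> i \in codom g;
  labelling_mate : forall p, p \in M -> g p.2 = model_mate m n model_k (g p.1) }.

Lemma in_ABC x : [|| x \in A, x \in B | x \in C].
Proof. by move: (in_setT x); rewrite -coverABC !inE -orbA. Qed.

Lemma matching_fst_inj : {in M &, injective fst}.
Proof.
move=> p q pM qM eq1; apply/eqP; apply: contraTT isT => pq.
by have := M_matching _ _ pM qM pq; rewrite eq1 eqxx.
Qed.

Lemma matching_snd_inj : {in M &, injective snd}.
Proof.
move=> p q pM qM eq2; apply/eqP; apply: contraTT isT => pq.
by have := M_matching _ _ pM qM pq; rewrite eq2 eqxx andbF.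
Qed.

Definition comate (x : T) : T := if [pick b | (b, x) \in M] is Some b then b else x.

Lemma comate_M p : p \in M -> comate p.2 = p.1.
Proof.
move=> pM; rewrite /comate; case: pickP => [b bM|/(_ p.1)].
  by have /= -> := congr1 fst (matching_snd_inj _ _ bM pM erefl).
by rewrite -surjective_pairing pM.
Qed.

Lemma matched_into_sub S : matched_into S \subset M.
Proof. by apply/subsetP => p; rewrite inE => /andP[]. Qed.

Lemma card_matched_fst S : #|fst @: matched_into S| = #|matched_into S|.
Proof. exact/card_in_imset/(sub_in2 (subsetP (matched_into_sub S)))/matching_fst_inj. Qed.

Lemma card_matched_snd S : #|snd @: matched_into S| = #|matched_into S|.
Proof. exact/card_in_imset/(sub_in2 (subsetP (matched_into_sub S)))/matching_snd_inj. Qed.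

Lemma matched_fst_sub S : fst @: matched_into S \subset B.
Proof.
apply/subsetP => b /imsetP[p]; rewrite inE => /andP[/M_sub/andP[p1B _] _] ->.
exact: p1B.
Qed.

Lemma matched_snd_sub S : snd @: matched_into S \subset S.
Proof. by apply/subsetP => x /imsetP[p]; rewrite inE => /andP[_ p2S] ->. Qed.

Lemma matched_A_le2 : #|matched_into A| <= 2.
Proof. by rewrite -card_matched_snd -cardA subset_leq_card ?matched_snd_sub. Qed.

Lemma matched_fst_disjoint : [disjoint fst @: matched_into A & fst @: matched_into C].
Proof.
rewrite -setI_eq0; apply/eqP/setP => b; rewrite !inE; apply/negP => /andP[].
case/imsetP=> p; rewrite inE => /andP[pM pA] ->.
case/imsetP=> q; rewrite inE => /andP[qM qC] /(matching_fst_inj _ _ pM qM) eq_pq.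
by move: (disjointFr disjAC pA); rewrite eq_pq qC.
Qed.

Lemma matched_AC_le : #|matched_into A| + #|matched_into C| <= m.
Proof.
rewrite -!card_matched_fst -cardsUI.
have /eqP-> : fst @: matched_into A :&: fst @: matched_into C == set0.
  by rewrite setI_eq0 matched_fst_disjoint.
by rewrite cards0 addn0 subset_leq_card // subUset !matched_fst_sub.
Qed.

Lemma exists_B_labelling : exists rB : T -> nat,
  [/\ interval_labelling B 2 rB,
      {in fst @: matched_into A, forall b, rB b < 2 + #|matched_into A|} &
      {in fst @: matched_into C, forall b, 2 + m - #|matched_into C| <= rB b}].
Proof.
set BA := fst @: matched_into A; set BC := fst @: matched_into C.
have := matched_AC_le; rewrite -!card_matched_fst -/BA -/BC => card_BAC.
have disj_BAC : [disjoint BA & BC] := matched_fst_disjoint.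
have no_inj : {in set0 &, injective (fun x : T => 0)} by move=> x; rewrite inE.
have no_range (X : {set T}) lo : {in set0, forall x : T, lo <= 0 < lo + #|X|}.
  by move=> x; rewrite inE.
have [rBA [rBA_inj rBA_range _] _] :=
  extend_interval_labelling 2 (sub0set BA) no_inj (no_range BA 2).
have [rBC [rBC_inj rBC_range _] _] :=
  extend_interval_labelling (2 + m - #|BC|) (sub0set BC) no_inj (no_range BC _).
pose p b := if b \in BA then rBA b else rBC b.
have BAC_B : BA :|: BC \subset B by rewrite subUset !matched_fst_sub.
have p_range : {in BA :|: BC, forall b, 2 <= p b < 2 + m}.
  move=> b; rewrite /p inE; case: ifP => [/rBA_range|_ /rBC_range]; lia.
have p_inj : {in BA :|: BC &, injective p}.
  move=> b b'; rewrite /p !inE.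
  case: ifP => bA; case: ifP => b'A /= b_in b'_in; first exact: rBA_inj.
  - by have := rBA_range b bA; have := rBC_range b' b'_in; lia.
  - by have := rBA_range b' b'A; have := rBC_range b b_in; lia.
  exact: rBC_inj.
have [rB rB_lab rB_p] := extend_interval_labelling 2 BAC_B p_inj p_range.
exists rB; split=> // b b_in; rewrite rB_p ?inE ?b_in ?orbT // /p.
- by rewrite b_in; have := rBA_range b b_in; lia.
- by rewrite (disjointFl disj_BAC b_in); have := rBC_range b b_in; lia.
Qed.

Section MateLabelling.
Variables (rB : T -> nat) (S : {set T}) (lo : nat).
Hypothesis mate_inj :
  {in fst @: matched_into S &, injective (fun b => model_mate m n model_k (rB b))}.
Hypothesis mate_range :
  {in fst @: matched_into S, forall b, lo <= model_mate m n model_k (rB b) < lo + #|S|}.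

Lemma exists_mate_labelling : exists2 rS, interval_labelling S lo rS &
  forall p, p \in matched_into S -> rS p.2 = model_mate m n model_k (rB p.1).
Proof.
pose mate_of x := model_mate m n model_k (rB (comate x)).
have MS_M := subsetP (matched_into_sub S).
have comate_snd p : p \in matched_into S -> comate p.2 = p.1 by move/MS_M/comate_M.
have mate_of_inj : {in snd @: matched_into S &, injective mate_of}.
  move=> _ _ /imsetP[p pMS ->] /imsetP[q qMS ->]; rewrite /mate_of !comate_snd //.
  move/(mate_inj _ _ (imset_f fst pMS) (imset_f fst qMS)).
  by move/(matching_fst_inj _ _ (MS_M _ pMS) (MS_M _ qMS))->.
have mate_of_range : {in snd @: matched_into S, forall x, lo <= mate_of x < lo + #|S|}.
  by move=> _ /imsetP[p pMS ->]; rewrite /mate_of comate_snd // mate_range ?imset_f.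
have [rS rS_lab rS_p] :=
  extend_interval_labelling lo (matched_snd_sub S) mate_of_inj mate_of_range.
by exists rS => // p pMS; rewrite rS_p ?imset_f // /mate_of comate_snd.
Qed.

End MateLabelling.

Section Glue.
Variables (rA rB rC : T -> nat).
Hypotheses (rA_lab : interval_labelling A 0 rA) (rB_lab : interval_labelling B 2 rB).
Hypothesis rC_lab : interval_labelling C 6 rC.
Hypothesis rA_mate :
  forall p, p \in matched_into A -> rA p.2 = model_mate m n model_k (rB p.1).
Hypothesis rC_mate :
  forall p, p \in matched_into C -> rC p.2 = model_mate m n model_k (rB p.1).

Definition glue (x : T) : nat := if x \in A then rA x else if x \in B then rB x else rC x.

Lemma glue_labelling : model_labelling glue.
Proof.
case: rA_lab rB_lab rC_lab => [rA_inj rA_range rA_onto] [rB_inj rB_range rB_onto].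
case=> rC_inj rC_range rC_onto.
have gA : {in A, glue =1 rA} by move=> x xA; rewrite /glue xA.
have gB : {in B, glue =1 rB} by move=> x xB; rewrite /glue (disjointFl disjAB xB) xB.
have gC : {in C, glue =1 rC}.
  by move=> x xC; rewrite /glue (disjointFl disjAC xC) (disjointFl disjBC xC).
split.
- move=> x y; case/or3P: (in_ABC x) => xP; case/or3P: (in_ABC y) => yP.
  + by rewrite !gA //; apply: rA_inj.
  + by rewrite gA // gB //; have := rA_range x xP; have := rB_range y yP; lia.
  + by rewrite gA // gC //; have := rA_range x xP; have := rC_range y yP; lia.
  + by rewrite gB // gA //; have := rB_range x xP; have := rA_range y yP; lia.
  + by rewrite !gB //; apply: rB_inj.
  + by rewrite gB // gC //; have := rB_range x xP; have := rC_range y yP; lia.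
  + by rewrite gC // gA //; have := rC_range x xP; have := rA_range y yP; lia.
  + by rewrite gC // gB //; have := rC_range x xP; have := rB_range y yP; lia.
  + by rewrite !gC //; apply: rC_inj.
- by move=> x xA; rewrite gA //; have := rA_range x xA; lia.
- by move=> x xB; rewrite gB // rB_range.
- by move=> x xC; rewrite gC // rC_range.
- move=> i; case/or3P=> [i_A|i_B|i_C].
  + by have [|x xA <-] := rA_onto i; [lia | rewrite -gA ?codom_f].
  + by have [x xB <-] := rB_onto i i_B; rewrite -gB ?codom_f.
  + by have [x xC <-] := rC_onto i i_C; rewrite -gC ?codom_f.
- move=> p pM; have /andP[p1B] := M_sub p pM; rewrite inE => /orP[p2A|p2C].
  + by rewrite gA // gB // rA_mate // inE pM.
  + by rewrite gC // gB // rC_mate // inE pM.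
Qed.

End Glue.

Lemma exists_model_labelling : exists g, model_labelling g.
Proof.
have kA_le2 := matched_A_le2; have kAC_le := matched_AC_le.
have [rB [rB_lab rBA_range rBC_range]] := exists_B_labelling.
have [rB_inj rB_range _] := rB_lab.
have BA_B := subsetP (matched_fst_sub A); have BC_B := subsetP (matched_fst_sub C).
have mate_BA b : b \in fst @: matched_into A -> model_mate m n model_k (rB b) = rB b - 2.
  move=> bA; have := rBA_range b bA; have := rB_range b (BA_B b bA).
  rewrite /model_mate /model_k; case: ifP => //; lia.
have mate_BC b : b \in fst @: matched_into C ->
    model_mate m n model_k (rB b) = rB b + n + 4 - m.
  move=> bC; have := rBC_range b bC; have := rB_range b (BC_B b bC).
  rewrite /model_mate /model_k; case: ifP => //; lia.
have [||rA rA_lab rA_mate] := @exists_mate_labelling rB A 0 _ _.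
- move=> b b' bA b'A; rewrite !mate_BA //.
  have := rB_range b (BA_B b bA); have := rB_range b' (BA_B b' b'A) => ? ? ?.
  by apply: rB_inj; rewrite ?BA_B //; lia.
- by move=> b bA; rewrite mate_BA //; have := rB_range b (BA_B b bA); have := rBA_range b bA; lia.
have [||rC rC_lab rC_mate] := @exists_mate_labelling rB C 6 _ _.
- move=> b b' bC b'C; rewrite !mate_BC //.
  have := rB_range b (BC_B b bC); have := rB_range b' (BC_B b' b'C) => ? ? ?.
  by apply: rB_inj; rewrite ?BC_B //; lia.
- by move=> b bC; rewrite mate_BC //; have := rB_range b (BC_B b bC); have := rBC_range b bC; lia.
by exists (glue rA rB rC); apply: glue_labelling.
Qed.

Section LabellingProperties.
Variable g : T -> nat.
Hypothesis g_lab : model_labelling g.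

Lemma labelling_part x :
  model_part (g x) = if x \in A then 0 else if x \in B then 1 else 2.
Proof.
case: g_lab => _ gA gB gC _ _; rewrite /model_part.
case/or3P: (in_ABC x) => xP; first by rewrite xP gA.
  rewrite (disjointFl disjAB xP) xP; have /andP[x2 xm] := gB x xP.
  by rewrite ltnNge x2 /= ifT //; lia.
rewrite (disjointFl disjAC xP) (disjointFl disjBC xP); have /andP[x6 _] := gC x xP.
by rewrite ltnNge (leq_trans _ x6) //= ltnNge x6.
Qed.

Lemma labelling_mem_A x : (x \in A) = (model_part (g x) == 0).
Proof. by rewrite labelling_part; case: ifP => // _; case: ifP. Qed.

Lemma labelling_mem_B x : (x \in B) = (model_part (g x) == 1).
Proof.
rewrite labelling_part; case: ifP => [xA|_]; last by case: ifP.
by rewrite (disjointFr disjAB xA).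
Qed.

Lemma labelling_mem_C x : (x \in C) = (model_part (g x) == 2).
Proof.
rewrite labelling_part; case: ifP => [xA|xnA]; first by rewrite (disjointFr disjAC xA).
case: ifP => [xB|xnB]; first by rewrite (disjointFr disjBC xB).
by have := in_ABC x; rewrite xnA xnB.
Qed.

Lemma labelling_vertex x : model_vertex m n (g x).
Proof.
case: g_lab => _ gA gB gC _ _; apply/or3P; case/or3P: (in_ABC x) => xP.
- by apply: Or31; rewrite gA.
- by apply: Or32; rewrite gB.
- by apply: Or33; rewrite gC.
Qed.

Lemma labelling_cross_adj x z : model_part (g x) != model_part (g z) ->
  model_adj m n model_k (g x) (g z) -> adj x z.
Proof.
have notB_AC y : y \notin B -> y \in A :|: C.
  by rewrite inE; case/or3P: (in_ABC y) => ->; rewrite ?orbT.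
move=> parts /and4P[_ _ _]; rewrite (negbTE parts) /=.
case: ifP => [/eqP x1|_]; last case: ifP => [/eqP z1|//].
- have xB : x \in B by rewrite labelling_mem_B x1.
  have zAC : z \in A :|: C by apply: notB_AC; rewrite labelling_mem_B -x1 eq_sym.
  by rewrite adj_B_AC //; apply: contra => /(labelling_mate g g_lab) ->.
- have zB : z \in B by rewrite labelling_mem_B z1.
  have xAC : x \in A :|: C by apply: notB_AC; rewrite labelling_mem_B -z1.
  by rewrite adj_sym adj_B_AC //; apply: contra => /(labelling_mate g g_lab) ->.
Qed.

End LabellingProperties.

Lemma matching_graph_packing (R : realFieldType) : exists w : {set T} -> R,
  [/\ frac_triangle_packing adj w,
      (forall t, (0 < w t)%R -> meets_exactly_two A B C t),
      (forall x y, adj x y -> x \in A -> y \in A -> edge_load adj w x y = 2^-1)%R,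
      (forall x y, adj x y -> x \in C -> y \in C -> edge_load adj w x y = 2^-1)%R &
      (forall x y, adj x y -> x \in B -> y \in B -> edge_load adj w x y = 1)%R].
Proof.
have [g g_lab] := exists_model_labelling.
apply: (@pullback_packing R T adj A B C m n model_k g) => //.
- by case: g_lab.
- exact: labelling_vertex g g_lab.
- by case: g_lab.
- by move=> i /or3P[]; lia.
- exact: labelling_mem_A g g_lab.
- exact: labelling_mem_B g g_lab.
- exact: labelling_mem_C g g_lab.
- exact: labelling_cross_adj g g_lab.
- exact: model_loads_ok_for.
Qed.

End MatchingLabelling.

Theorem proposition7p3 (R : realFieldType) (T : finType) (adj : rel T)
  (A B C : {set T}) (M : {set T * T}) :
  simple_graph adj ->
  [disjoint A & B] -> [disjoint A & C] -> [disjoint B & C] ->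
  A :|: B :|: C = [set: T] ->
  #|A| = 2%N ->
  (#|B| == 3%N) || (#|B| == 4%N) ->
  (#|C| == 3%N) || (#|C| == 4%N) ->
  (* M is a matching of the complete bipartite graph between B and A u C *)
  (forall p, p \in M -> (p.1 \in B) && (p.2 \in A :|: C)) ->
  (forall p q, p \in M -> q \in M -> p != q -> (p.1 != q.1) && (p.2 != q.2)) ->
  (* the B -- (A u C) edges of G are exactly K_{B, A u C} minus M *)
  (forall b x, b \in B -> x \in A :|: C -> adj b x = ((b, x) \notin M)) ->
  (* M has at most two edges between B and C *)
  (#|[set p in M | p.2 \in C]| <= 2)%N ->
  (* no edges between A and C *)
  (forall a c, a \in A -> c \in C -> ~~ adj a c) ->
  exists w : {set T} -> R,
    [/\ frac_triangle_packing adj w,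
        (forall t, (0 < w t)%R -> meets_exactly_two A B C t),
        (forall x y, adj x y -> x \in A -> y \in A -> edge_load adj w x y = 2^-1)%R,
        (forall x y, adj x y -> x \in C -> y \in C -> edge_load adj w x y = 2^-1)%R &
        (forall x y, adj x y -> x \in B -> y \in B -> edge_load adj w x y = 1)%R].
Proof.
(* The packing gives no weight to triangles through an A--C edge. *)
move=> [adj_sym adj_irr] disjAB disjAC disjBC coverABC cardA cardB cardC.
move=> M_sub M_matching adj_B_AC matched_C_le2 _.
exact: (@matching_graph_packing T A B C M).
Qed.
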